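(* Let $\mathcal{R}\subset\mathbb{R}_{>0}^n$ be a compact log-convex set and let $\ell:\mathcal{R}\to\mathbb{R}_{>0}$ be continuous. Then for every $\tilde\varepsilon>0$ there exist positive integers $p,q$ and a subtraction-free expression $E$ in $n$ variables $y_1,\dots,y_n$ such that the function $$f(\mathbf{x})=E(x_1^{1/q},\dots,x_n^{1/q})^{1/p}$$ (obtained by substituting $x_i^{1/q}$ for $y_i$) satisfies, for all $\mathbf{x}\in\mathcal{R}$, $$\left|\frac{\ell(\mathbf{x})-f(\mathbf{x})}{\min(\ell(\mathbf{x}),f(\mathbf{x}))}\right|\leqslant\tilde\varepsilon.$$
   Context: A set $\mathcal{R}\subset\mathbb{R}_{>0}^n$ is log-convex if its image under the entrywise logarithm is convex. A subtraction-free expression in variables $y_1,\dots,y_n$ is a formal term generated by the grammar $E\to E+E,\ E\times E,\ E/E,\ C,\ y_1,\dots,y_n$, where $C$ ranges over positive real constants (i.e., built from the variables and positive constants using only addition, multiplication and division, no subtraction); it is evaluated at positive arguments in the obvious way. *)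

From HB Require Import structures.
From mathcomp Require Import all_boot all_order all_algebra.
From mathcomp Require Import all_classical all_reals all_analysis.
Set Implicit Arguments. Unset Strict Implicit. Unset Printing Implicit Defensive.
Import Order.TTheory GRing.Theory Num.Theory.
Import numFieldNormedType.Exports.
Local Open Scope classical_set_scope.
Local Open Scope ring_scope.

Definition vlog {R : realType} {n : nat} (x : 'rV[R]_n) : 'rV[R]_n :=
  \row_i ln (x 0 i).

Definition convex_set {R : realType} {n : nat} (S : set 'rV[R]_n) : Prop :=
  forall u v, S u -> S v -> forall t : R, 0 <= t <= 1 ->
    S ((1 - t) *: u + t *: v).

Definition log_convex {R : realType} {n : nat} (A : set 'rV[R]_n) : Prop :=
  (forall x, A x -> forall i, 0 < x 0 i) /\ convex_set (vlog @` A).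

(* subtraction-free expressions in variables y_0 .. y_{n-1} *)
Inductive sfexpr (R : Type) (n : nat) : Type :=
| SFAdd : sfexpr R n -> sfexpr R n -> sfexpr R n
| SFMul : sfexpr R n -> sfexpr R n -> sfexpr R n
| SFDiv : sfexpr R n -> sfexpr R n -> sfexpr R n
| SFConst : R -> sfexpr R n
| SFVar : 'I_n -> sfexpr R n.

Fixpoint sf_pos_consts {R : realType} {n : nat} (E : sfexpr R n) : Prop :=
  match E with
  | SFAdd a b | SFMul a b | SFDiv a b => sf_pos_consts a /\ sf_pos_consts b
  | SFConst c => 0 < c
  | SFVar _ => True
  end.

Fixpoint sf_eval {R : realType} {n : nat} (E : sfexpr R n) (y : 'I_n -> R) : R :=
  match E with
  | SFAdd a b => sf_eval a y + sf_eval b y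
  | SFMul a b => sf_eval a y * sf_eval b y
  | SFDiv a b => sf_eval a y / sf_eval b y
  | SFConst c => c
  | SFVar i => y i
  end.

(* The approximant is a Shepard-type weighted mean
     f(x) = (sum_a l(a) / K_N(x,a)) / (sum_a 1 / K_N(x,a))
   over finitely many sample points a of A, with the subtraction-free kernel
     K_N(x,a) = 1 + sum_i ((x_i/a_i)^N + (a_i/x_i)^N);
   hence p = q = 1, and of log-convexity only the positivity of the points of A
   is used.  The kernel is comparable to T(x,a)^N, where
   T(x,a) = max_i max(x_i/a_i, a_i/x_i) is a submultiplicative distance.
   By compactness, A is covered by finitely many balls T(x,a) < s_a such that
   l varies by a factor at most theta on the ball T(x,a) < s_a^3.  For x in the
   ball around a, every sample point j with T(x,j) < s_a^2 lies in that larger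
   ball, so l(j) is within theta^2 of l(x); every other sample point has weight
   at most (1 + 2n) s_a^-N times the weight of a, which is negligible for N
   large.  So f(x) is within a factor close to theta^2 of l(x). *)

From HB Require Import structures.
From mathcomp Require Import all_boot all_order all_algebra.
From mathcomp Require Import all_classical all_reals all_analysis.
From mathcomp Require Import ring lra.
Import Order.TTheory GRing.Theory Num.Theory.
Import numFieldNormedType.Exports.
Local Open Scope classical_set_scope.
Local Open Scope ring_scope.
Set Implicit Arguments. Unset Strict Implicit. Unset Printing Implicit Defensive.

Section RealFacts.
Variable R : realType.

Lemma expn_unbounded (s M : R) : 1 < s -> exists N : nat, M <= s ^+ N.
Proof.
move=> s_gt1; have ln_s_gt0 := ln_gt0 s_gt1.
have b_ge0 : 0 <= Num.max 0 (M / ln s) by rewrite le_max lexx.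
exists (Num.bound (Num.max 0 (M / ln s))).
have /ltW := archi_boundP b_ge0; set N := Num.bound _ => N_ge.
have -> : s ^+ N = expR (N%:R * ln s) by rewrite expRM_natl lnK ?posrE ?(lt_trans ltr01).
apply: le_trans (expR_ge1Dx _).
have MN : M / ln s <= N%:R by apply: le_trans N_ge; rewrite le_max lexx orbT.
have MlnE : M / ln s * ln s = M by rewrite divfK ?gt_eqF.
nra.
Qed.

Lemma expn_unbounded_seq (I : eqType) (r : seq I) (s : I -> R) (M : R) :
  (forall i, i \in r -> 1 < s i) -> exists N : nat, forall i, i \in r -> M <= s i ^+ N.
Proof.
elim: r => [|i r IH] s_gt1; first by exists 0%N.
have [Ni Mi] := expn_unbounded M (s_gt1 i (mem_head i r)).
have [Nr Mr] := IH (fun j jr => s_gt1 j (@mem_behead _ (i :: r) j jr)).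
exists (maxn Ni Nr) => j; rewrite in_cons => /predU1P[->|jr].
  apply: le_trans Mi (ler_weXn2l _ (leq_maxl _ _)); exact/ltW/s_gt1/mem_head.
apply: le_trans (Mr j jr) (ler_weXn2l _ (leq_maxr _ _)).
by apply/ltW/s_gt1; rewrite in_cons jr orbT.
Qed.

Lemma exists_root_gt1 (k : nat) (s : R) : 1 < s ->
  exists2 r, 1 < r & r ^+ k.+1 = s.
Proof.
move=> s_gt1; set r := s `^ (k.+1%:R)^-1.
have rk : r ^+ k.+1 = s.
  by rewrite -powR_mulrn ?powR_ge0 // -powRrM mulVf ?pnatr_eq0 // powRr1 // ltW // (lt_trans ltr01).
exists r => //; rewrite ltNge; apply: contraTN s_gt1 => r_le1.
by rewrite -rk -leNgt expr_le1 // powR_ge0.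
Qed.

Lemma rel_err_le (L f eps : R) : 0 < L -> 0 < f ->
  f <= (1 + eps) * L -> L <= (1 + eps) * f ->
  `|(L - f) / Num.min L f| <= eps.
Proof.
move=> L_gt0 f_gt0 fL Lf; rewrite minEle.
case: ifP => [L_le_f|/negbT]; rewrite ler_norml ?ler_pdivrMr ?ler_pdivlMr //; last first.
  rewrite -ltNge => f_lt_L; apply/andP; split; nra.
by apply/andP; split; nra.
Qed.

End RealFacts.

Section WeightedMean.
Variables (R : realFieldType) (I : eqType) (r : seq I) (w v : I -> R).

Definition wmean := (\sum_(j <- r) v j * w j) / \sum_(j <- r) w j.

Hypotheses (w_ge0 : forall j, j \in r -> 0 <= w j).
Variables (j0 : I) (eta : R).
Hypotheses (j0r : j0 \in r) (w_j0 : 0 < w j0) (eta_ge0 : 0 <= eta).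

Let W_ge : w j0 <= \sum_(j <- r) w j.
Proof. by rewrite (big_rem j0) //= lerDl big_seq sumr_ge0 // => j /mem_rem /w_ge0. Qed.

Let W_gt0 : 0 < \sum_(j <- r) w j.
Proof. exact: lt_le_trans W_ge. Qed.

Let sum_const (x : R) : \sum_(j <- r) x = (size r)%:R * x.
Proof. by rewrite big_const_seq count_predT iter_addr_0 mulr_natl. Qed.

Lemma wmean_le (c C : R) : 0 <= c -> 0 <= C ->
  (forall j, j \in r -> v j <= C) ->
  (forall j, j \in r -> v j <= c \/ w j <= eta * w j0) ->
  wmean <= c + (size r)%:R * C * eta.
Proof.
move=> c_ge0 C_ge0 v_le near_far; rewrite /wmean ler_pdivrMr //.
have far_ge0 : 0 <= C * eta * w j0 by rewrite !mulr_ge0 // ltW.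
have : \sum_(j <- r) v j * w j <= \sum_(j <- r) (c * w j + C * eta * w j0).
  rewrite big_seq_cond [leRHS]big_seq_cond; apply: ler_sum => j /andP[jr _].
  have wj := w_ge0 jr; have vj := v_le j jr; have cwj := mulr_ge0 c_ge0 wj.
  by case: (near_far j jr) => h; nra.
rewrite big_split /= -mulr_sumr sum_const.
have : (size r)%:R * (C * eta) * w j0 <= (size r)%:R * (C * eta) * \sum_(j <- r) w j.
  by rewrite ler_wpM2l // mulr_ge0 // mulr_ge0.
nra.
Qed.

Lemma wmean_ge (c : R) : 0 <= c ->
  (forall j, j \in r -> 0 <= v j) -> c <= v j0 ->
  (forall j, j \in r -> c <= v j \/ w j <= eta * w j0) ->
  c <= (1 + (size r)%:R * eta) * wmean.
Proof.
move=> c_ge0 v_ge0 c_le near_far; rewrite /wmean mulrA ler_pdivlMr //.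
have S_ge : v j0 * w j0 <= \sum_(j <- r) v j * w j.
  rewrite (big_rem j0) //= lerDl big_seq sumr_ge0 // => j /mem_rem jr.
  by rewrite mulr_ge0 ?v_ge0 ?w_ge0.
have : \sum_(j <- r) c * w j <= \sum_(j <- r) (v j * w j + c * eta * w j0).
  rewrite big_seq_cond [leRHS]big_seq_cond; apply: ler_sum => j /andP[jr _].
  have wj := w_ge0 jr; have vj := v_ge0 j jr.
  have far_ge0 := mulr_ge0 (mulr_ge0 c_ge0 eta_ge0) (ltW w_j0).
  by case: (near_far j jr) => h; nra.
rewrite -mulr_sumr big_split /= -mulr_sumr sum_const.
have : c * w j0 <= v j0 * w j0 by rewrite ler_pM2r.
have := mulr_ge0 (ler0n R (size r)) eta_ge0.
nra.
Qed.

End WeightedMean.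

Section MultiplicativeDistance.
Variables (R : realType) (n : nat).
Implicit Types (x a b : 'rV[R]_n) (N : nat).

Definition positive_row x := forall i, 0 < x 0 i.

Definition coord_ratio x a i := Num.max (x 0 i / a 0 i) (a 0 i / x 0 i).

(* [mdist x a] is [exp] of the sup-distance between [vlog x] and [vlog a]. *)
Definition mdist x a := \big[Num.max/1]_(i < n) coord_ratio x a i.

Lemma mdist_ge1 x a : 1 <= mdist x a.
Proof. exact: bigmax_ge_id. Qed.

Lemma mdistC x a : mdist x a = mdist a x.
Proof. by apply: eq_bigr => i _; rewrite /coord_ratio maxC. Qed.

Lemma mdist_leP x a c : positive_row x -> positive_row a -> 1 <= c ->
  reflect (forall i, x 0 i <= c * a 0 i /\ a 0 i <= c * x 0 i) (mdist x a <= c).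
Proof.
move=> x_pos a_pos c_ge1.
apply: (iffP (bigmax_leP _ _ _ _)) => [[_ le_c] i|le_c].
  by have := le_c i isT; rewrite /coord_ratio ge_max !ler_pdivrMr // => /andP.
by split=> // i _; rewrite /coord_ratio ge_max !ler_pdivrMr //; apply/andP.
Qed.

Lemma mdist_ltP x a c : positive_row x -> positive_row a -> 1 < c ->
  reflect (forall i, x 0 i < c * a 0 i /\ a 0 i < c * x 0 i) (mdist x a < c).
Proof.
move=> x_pos a_pos c_gt1.
apply: (iffP (bigmax_ltP _ _ _ _)) => [[_ lt_c] i|lt_c].
  by have := lt_c i isT; rewrite /coord_ratio gt_max !ltr_pdivrMr // => /andP.
by split=> // i _; rewrite /coord_ratio gt_max !ltr_pdivrMr //; apply/andP.
Qed.

Lemma coord_le_mdist x a : positive_row x -> positive_row a ->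
  forall i, x 0 i <= mdist x a * a 0 i /\ a 0 i <= mdist x a * x 0 i.
Proof. by move=> x_pos a_pos; apply/(mdist_leP x_pos a_pos (mdist_ge1 x a)). Qed.

Lemma mdist_le_mul x a b : positive_row x -> positive_row a -> positive_row b ->
  mdist x b <= mdist x a * mdist a b.
Proof.
move=> x_pos a_pos b_pos; have T1 := mdist_ge1 x a; have T2 := mdist_ge1 a b.
apply/(mdist_leP x_pos b_pos); first by rewrite -[1]mulr1 ler_pM.
move=> i; have [xa ax] := coord_le_mdist x_pos a_pos i.
have [ab ba] := coord_le_mdist a_pos b_pos i.
have xi := x_pos i; have ai := a_pos i; have bi := b_pos i.
by split; nra.
Qed.

Lemma coord_dist_le_mdist x a : positive_row x -> positive_row a ->
  forall i, `|a 0 i - x 0 i| <= (mdist x a - 1) * mdist x a * a 0 i.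
Proof.
move=> x_pos a_pos i; have [xa ax] := coord_le_mdist x_pos a_pos i.
have T1 := mdist_ge1 x a; have xi := x_pos i; have ai := a_pos i.
by rewrite ler_norml; apply/andP; split; nra.
Qed.

Lemma coord_near_of_mdist_lt a r : positive_row a -> 0 < r ->
  exists2 s, 1 < s & forall x, positive_row x -> mdist x a < s ->
    forall i, `|a 0 i - x 0 i| < r.
Proof.
move=> a_pos r_gt0; pose B := \big[Num.max/1]_(i < n) a 0 i.
have B_ge1 : 1 <= B := bigmax_ge_id _ _ _ _.
pose d := Num.min 1 (r / (2 * B)).
have d_gt0 : 0 < d by rewrite lt_min ltr01 divr_gt0 // mulr_gt0 // (lt_le_trans ltr01).
have d_le1 : d <= 1 by rewrite ge_min lexx.
have dB_le : d * (2 * B) <= r.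
  by rewrite -ler_pdivlMr ?ge_min ?lexx ?orbT // mulr_gt0 // (lt_le_trans ltr01).
exists (1 + d) => [|x x_pos lt_s i]; first by rewrite ltrDl.
apply: le_lt_trans (coord_dist_le_mdist x_pos a_pos i) _.
have ai_le : a 0 i <= B := le_bigmax _ _ _.
have T1 := mdist_ge1 x a; have ai := a_pos i.
have : (mdist x a - 1) * mdist x a < d * 2 by nra.
nra.
Qed.

Lemma mdist_lt_of_coord_near a s : positive_row a -> 1 < s ->
  exists2 r, 0 < r & forall x, (forall i, `|a 0 i - x 0 i| < r) ->
    positive_row x /\ mdist x a < s.
Proof.
move=> a_pos s_gt1; pose m := \big[Num.min/1]_(i < n) a 0 i.
have m_gt0 : 0 < m by apply/bigmin_gtP; split=> // i _; exact: a_pos.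
have s_gt0 : 0 < s by apply: lt_trans s_gt1.
have ds_gt0 : 0 < 1 - s^-1 by rewrite subr_gt0 invf_lt1.
exists (m * (1 - s^-1)) => [|x near_a]; first exact: mulr_gt0.
have near_i i : `|a 0 i - x 0 i| < a 0 i * (1 - s^-1).
  by apply: lt_le_trans (near_a i) _; rewrite ler_pM2r // bigmin_le.
have sV_gt0 : 0 < s^-1 by rewrite invr_gt0.
have ss : s * s^-1 = 1 by rewrite mulfV // gt_eqF.
have x_pos : positive_row x.
  move=> i; have ai := a_pos i.
  by have := near_i i; rewrite ltr_norml => /andP[_ ?]; nra.
split=> //; apply/(mdist_ltP x_pos a_pos s_gt1) => i.
have ai := a_pos i; have xi := x_pos i.
by have := near_i i; rewrite ltr_norml => /andP[? ?]; split; nra.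
Qed.

End MultiplicativeDistance.

Section Kernel.
Variables (R : realType) (n : nat).
Implicit Types (x a b : 'rV[R]_n) (N : nat).

Definition kernel N x a :=
  1 + \sum_(i < n) ((x 0 i / a 0 i) ^+ N + (a 0 i / x 0 i) ^+ N).

Lemma kernel_ge1 N x a : positive_row x -> positive_row a -> 1 <= kernel N x a.
Proof.
move=> x_pos a_pos; rewrite lerDl sumr_ge0 // => i _.
by rewrite addr_ge0 // exprn_ge0 // divr_ge0 // ltW.
Qed.

Lemma expn_mdist_le_kernel N x a : positive_row x -> positive_row a ->
  mdist x a ^+ N <= kernel N x a.
Proof.
move=> x_pos a_pos.
suff : 0 <= mdist x a /\ mdist x a ^+ N <= kernel N x a by case.
rewrite /mdist; elim/big_ind: _ => [|u v [u_ge0 uN] [v_ge0 vN]|i _].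
- by rewrite expr1n kernel_ge1.
- by rewrite maxEle; case: ifP.
have xi := x_pos i; have ai := a_pos i.
have ratio_ge0 (u v : R) : 0 < u -> 0 < v -> 0 <= (u / v) ^+ N.
  by move=> u_gt0 v_gt0; rewrite exprn_ge0 // divr_ge0 // ltW.
have term_le : (x 0 i / a 0 i) ^+ N + (a 0 i / x 0 i) ^+ N <= kernel N x a.
  rewrite /kernel (bigD1 i) //= addrCA lerDl addr_ge0 // sumr_ge0 // => j _.
  by rewrite addr_ge0 // ratio_ge0.
rewrite /coord_ratio maxEle.
case: ifP => _; (split; first by rewrite divr_ge0 // ltW); apply: le_trans term_le.
- by rewrite lerDr ratio_ge0.
- by rewrite lerDl ratio_ge0.
Qed.

Lemma kernel_le_expn_mdist N x a : positive_row x -> positive_row a ->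
  kernel N x a <= (1 + 2 * n%:R) * mdist x a ^+ N.
Proof.
move=> x_pos a_pos; set t := mdist x a ^+ N.
have t_ge1 : 1 <= t by rewrite exprn_ege1 // mdist_ge1.
have term_le i : (x 0 i / a 0 i) ^+ N + (a 0 i / x 0 i) ^+ N <= t + t.
  have := le_bigmax 1 (coord_ratio x a) i; rewrite /coord_ratio ge_max => /andP[xa ax].
  have xi := x_pos i; have ai := a_pos i; have T_ge0 := le_trans ler01 (mdist_ge1 x a).
  by apply: lerD; apply: lerXn2r; rewrite // nnegrE divr_ge0 // ltW.
have : \sum_(i < n) ((x 0 i / a 0 i) ^+ N + (a 0 i / x 0 i) ^+ N) <= (t + t) *+ n.
  by rewrite -[n in _ *+ n]card_ord -sumr_const; apply: ler_sum => i _; exact: term_le.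
rewrite /kernel -mulr_natr; nra.
Qed.

Lemma kernel_le_far N x a b (t eta : R) :
  positive_row x -> positive_row a -> positive_row b -> 0 < t ->
  mdist x a <= t -> t ^+ 2 <= mdist x b -> 1 + 2 * n%:R <= eta * t ^+ N ->
  kernel N x a <= eta * kernel N x b.
Proof.
move=> x_pos a_pos b_pos t_gt0 near_a far_b eta_big.
have tN_gt0 : 0 < t ^+ N := exprn_gt0 _ t_gt0.
have eta_ge0 : 0 <= eta.
  by rewrite -(pmulr_lge0 _ tN_gt0); apply: le_trans eta_big; rewrite addr_ge0.
have T_ge0 u : 0 <= mdist x u := le_trans ler01 (mdist_ge1 x u).
have ker_a : kernel N x a <= (1 + 2 * n%:R) * t ^+ N.
  apply: le_trans (kernel_le_expn_mdist N x_pos a_pos) _.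
  rewrite ler_wpM2l ?addr_ge0 //.
  by apply: lerXn2r; rewrite // nnegrE ?T_ge0 // ltW.
have ker_b : t ^+ N * t ^+ N <= kernel N x b.
  apply: le_trans (expn_mdist_le_kernel N x_pos b_pos).
  rewrite -exprMn -expr2.
  by apply: lerXn2r; rewrite // nnegrE ?T_ge0 // exprn_ge0 // ltW.
apply: le_trans ker_a _; apply: le_trans (ler_wpM2l eta_ge0 ker_b).
by rewrite mulrA ler_wpM2r // ltW.
Qed.

Definition kmean N (l : 'rV[R]_n -> R) (pts : seq 'rV[R]_n) x :=
  wmean pts (fun a => (kernel N x a)^-1) l.

End Kernel.

Section Covering.
Variables (R : realType) (n : nat) (A : set 'rV[R]_n) (l : 'rV[R]_n -> R).

Lemma continuous_within_coord a e : {within A, continuous l} -> A a -> 0 < e ->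
  exists2 r, 0 < r &
    forall x, A x -> (forall i, `|a 0 i - x 0 i| < r) -> `|l a - l x| < e.
Proof.
move=> l_cont Aa e_gt0.
have /nbhs_ballP[r r_gt0 near_a] :=
  (proj1 (subspace_continuousP _ _) l_cont) a Aa _ (nbhsx_ballx (l a) e e_gt0).
exists r => // x Ax near_x.
suff : ball (l a) e (l x) by rewrite -ball_normE.
apply: near_a => //; split=> // i j.
by rewrite (ord1 i) -ball_normE; exact: near_x.
Qed.

Hypotheses (A_pos : forall x, A x -> positive_row x)
  (l_cont : {within A, continuous l}) (l_pos : forall x, A x -> 0 < l x).

Lemma local_comparability a theta : A a -> 1 < theta ->
  exists2 s, 1 < s & forall x, A x -> mdist x a < s ->
    l x <= theta * l a /\ l a <= theta * l x.
Proof.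
move=> Aa theta_gt1; have la := l_pos Aa; have theta_gt0 := lt_trans ltr01 theta_gt1.
have e_gt0 : 0 < l a * (1 - theta^-1) by rewrite mulr_gt0 // subr_gt0 invf_lt1.
have [r r_gt0 l_near] := continuous_within_coord l_cont Aa e_gt0.
have [s s_gt1 coord_near] := coord_near_of_mdist_lt (A_pos Aa) r_gt0.
exists s => // x Ax lt_s; have lx := l_pos Ax.
have := l_near x Ax (coord_near x (A_pos Ax) lt_s); rewrite ltr_norml => /andP[h1 h2].
have thetaV : theta * theta^-1 = 1 by rewrite mulfV // gt_eqF.
have : 0 < theta^-1 by rewrite invr_gt0.
split; nra.
Qed.

Lemma comparability_radii theta : 1 < theta ->
  exists s : 'rV[R]_n -> R, (forall a, A a -> 1 < s a) /\
    forall a, A a -> forall x, A x -> mdist x a < s a ^+ 3 ->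
      l x <= theta * l a /\ l a <= theta * l x.
Proof.
move=> theta_gt1.
have radius a : exists s, A a -> 1 < s /\ forall x, A x -> mdist x a < s ^+ 3 ->
    l x <= theta * l a /\ l a <= theta * l x.
  have [Aa|] := pselect (A a); last by exists 0.
  have [s0 s0_gt1 cmp] := local_comparability Aa theta_gt1.
  have [s s_gt1 s3] := exists_root_gt1 2 s0_gt1.
  by exists s => _; split=> // x Ax; rewrite s3; exact: cmp.
have [s s_spec] := choice radius.
by exists s; split=> a /s_spec[].
Qed.

Lemma mdist_finite_cover (s : 'rV[R]_n -> R) : compact A ->
  (forall a, A a -> 1 < s a) ->
  exists2 pts : seq 'rV[R]_n, (forall a, a \in pts -> A a) &
    forall x, A x -> exists2 a, a \in pts & mdist x a < s a.
Proof.
rewrite compact_cover => A_cover s_gt1.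
pose U a := interior [set x | mdist x a < s a].
have A_sub : A `<=` cover A U.
  move=> a Aa; exists a => //; rewrite /U /interior /=.
  have [r r_gt0 near_a] := mdist_lt_of_coord_near (A_pos Aa) (s_gt1 a Aa).
  apply/nbhs_ballP; exists r => // x [_ ball_x].
  suff /near_a[] : forall i, `|a 0 i - x 0 i| < r by [].
  by move=> i; have := ball_x 0 i; rewrite -ball_normE.
have [D DA D_cover] := A_cover _ A U (fun a _ => @open_interior _ _) A_sub.
exists (finmap.enum_fset D) => [a aD|x /D_cover[a aD /interior_subset]]; last by exists a.
by have := DA a aD; rewrite in_setE.
Qed.

End Covering.

Section Sampling.
Variables (R : realType) (n : nat) (A : set 'rV[R]_n) (l : 'rV[R]_n -> R).
Variables (theta : R) (pts : seq 'rV[R]_n) (s : 'rV[R]_n -> R).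
Hypotheses (A_pos : forall x, A x -> positive_row x) (l_pos : forall x, A x -> 0 < l x).
Hypotheses (theta_ge1 : 1 <= theta) (pts_A : forall a, a \in pts -> A a).
Hypotheses (s_gt1 : forall a, A a -> 1 < s a)
  (s_cmp : forall a, A a -> forall x, A x -> mdist x a < s a ^+ 3 ->
     l x <= theta * l a /\ l a <= theta * l x)
  (pts_cover : forall x, A x -> exists2 a, a \in pts & mdist x a < s a).

Let s_le_expnS m a : A a -> s a <= s a ^+ m.+1.
Proof. by move=> Aa; rewrite ler_eXnr // ltW // s_gt1. Qed.

Lemma sample_close x a j : A x -> a \in pts -> mdist x a < s a ->
  j \in pts -> mdist x j < s a ^+ 2 ->
  l j <= theta ^+ 2 * l x /\ l x <= theta ^+ 2 * l j.
Proof.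
move=> Ax /pts_A Aa xa /pts_A Aj xj.
have s_gt0 : 0 < s a := lt_trans ltr01 (s_gt1 Aa).
have ja : mdist j a < s a ^+ 3.
  apply: le_lt_trans (mdist_le_mul (A_pos Aj) (A_pos Ax) (A_pos Aa)) _.
  by rewrite mdistC exprSr ltr_pM // (le_trans ler01) ?mdist_ge1.
have [xa1 xa2] := s_cmp Aa Ax (lt_le_trans xa (s_le_expnS 2 Aa)).
have [ja1 ja2] := s_cmp Aa Aj ja.
have la := l_pos Aa; have lx := l_pos Ax; have lj := l_pos Aj.
by rewrite expr2; split; nra.
Qed.

Let k : R := (size pts)%:R.
Let K := theta ^+ 2 * (\sum_(a <- pts) l a) * \sum_(a <- pts) (l a)^-1.

Let K_ge0 : 0 <= K.
Proof.
have l_ge0 a : a \in pts -> 0 <= l a by move=> /pts_A/l_pos/ltW.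
rewrite /K !mulr_ge0 ?exprn_ge0 ?(le_trans ler01 theta_ge1) // big_seq sumr_ge0 //.
by move=> a /l_ge0; rewrite invr_ge0.
Qed.

Let sample_le_K x j : A x -> j \in pts -> l j <= K * l x.
Proof.
move=> Ax j_pts; have [a a_pts xa] := pts_cover Ax.
have lx := l_pos Ax; have la := l_pos (pts_A a_pts).
have l_ge0 b : b \in pts -> 0 <= l b by move=> /pts_A/l_pos/ltW.
have lj_le : l j <= \sum_(b <- pts) l b.
  by rewrite (big_rem j) //= lerDl big_seq sumr_ge0 // => b /mem_rem /l_ge0.
have la_inv_le : (l a)^-1 <= \sum_(b <- pts) (l b)^-1.
  rewrite (big_rem a) //= lerDl big_seq sumr_ge0 // => b /mem_rem /l_ge0.
  by rewrite invr_ge0.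
have [la_le _] :=
  sample_close Ax a_pts xa a_pts (lt_le_trans xa (s_le_expnS 1 (pts_A a_pts))).
set Sl := \sum_(b <- pts) l b; set Si := \sum_(b <- pts) (l b)^-1.
have Sl_ge0 : 0 <= Sl by apply: le_trans lj_le; exact/l_ge0.
have Si_ge0 : 0 <= Si by apply: le_trans la_inv_le; rewrite invr_ge0 ltW.
have one_le : 1 <= l a * Si by rewrite -(ler_pdivrMl _ _ la) mulr1.
have -> : K * l x = Sl * (theta ^+ 2 * l x * Si) by rewrite /K -/Sl -/Si; ring.
apply: le_trans lj_le (le_trans (ler_peMr Sl_ge0 one_le) _).
by rewrite ler_wpM2l // ler_wpM2r.
Qed.

Let kmean_bounds eta N : 0 <= eta ->
  (forall a, a \in pts -> 1 + 2 * n%:R <= eta * s a ^+ N) ->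
  forall x, A x -> kmean N l pts x <= (theta ^+ 2 + k * K * eta) * l x /\
                   l x <= theta ^+ 2 * (1 + k * eta) * kmean N l pts x.
Proof.
move=> eta_ge0 N_big x Ax; have [a a_pts xa] := pts_cover Ax.
have x_pos := A_pos Ax; have lx := l_pos Ax; have Aa := pts_A a_pts.
have s_gt0 : 0 < s a := lt_trans ltr01 (s_gt1 Aa).
have ker_gt0 b : b \in pts -> 0 < kernel N x b.
  by move=> /pts_A/A_pos b_pos; apply: lt_le_trans (kernel_ge1 N x_pos b_pos).
have w_ge0 b : b \in pts -> 0 <= (kernel N x b)^-1.
  by move=> /ker_gt0; rewrite invr_ge0 => /ltW.
have w_a : 0 < (kernel N x a)^-1 by rewrite invr_gt0 ker_gt0.
have near_far j : j \in pts ->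
    mdist x j < s a ^+ 2 \/ (kernel N x j)^-1 <= eta * (kernel N x a)^-1.
  move=> j_pts; have [near|far] := ltP (mdist x j) (s a ^+ 2); [by left|right].
  have := kernel_le_far x_pos (A_pos Aa) (A_pos (pts_A j_pts)) s_gt0 (ltW xa) far (N_big a a_pts).
  have ka := ker_gt0 a a_pts; have kj := ker_gt0 j j_pts.
  by rewrite -div1r ler_pdivrMr // mulrAC ler_pdivlMr // mul1r.
have theta2_gt0 : 0 < theta ^+ 2 by rewrite exprn_gt0 // (lt_le_trans ltr01).
split.
  have -> : (theta ^+ 2 + k * K * eta) * l x = theta ^+ 2 * l x + k * (K * l x) * eta.
    by ring.
  apply: (wmean_le w_ge0 a_pts w_a eta_ge0).
  - exact: mulr_ge0 (ltW theta2_gt0) (ltW lx).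
  - exact: mulr_ge0 K_ge0 (ltW lx).
  - by move=> j /(sample_le_K Ax).
  - move=> j j_pts; case: (near_far j j_pts) => [near|]; [left|by right].
    exact: (sample_close Ax a_pts xa j_pts near).1.
rewrite -mulrA -ler_pdivrMl //.
apply: (wmean_ge w_ge0 a_pts w_a eta_ge0).
- by rewrite mulr_ge0 ?invr_ge0 ?ltW.
- by move=> j /pts_A /l_pos /ltW.
- rewrite ler_pdivrMl //.
  exact: (sample_close Ax a_pts xa a_pts (lt_le_trans xa (s_le_expnS 1 Aa))).2.
- move=> j j_pts; case: (near_far j j_pts) => [near|]; [left|by right].
  by rewrite ler_pdivrMl // (sample_close Ax a_pts xa j_pts near).2.
Qed.

Lemma kmean_rel_err eps : 0 < eps -> theta ^+ 2 <= 1 + eps / 2 ->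
  exists N, forall x, A x ->
    `|(l x - kmean N l pts x) / Num.min (l x) (kmean N l pts x)| <= eps.
Proof.
move=> eps_gt0 theta2_le.
have k_ge0 : 0 <= k by [].
have theta2_ge0 : 0 <= theta ^+ 2 by rewrite exprn_ge0 // (le_trans ler01).
set D := 2 * (k * K + theta ^+ 2 * k + 1).
have D_gt0 : 0 < D by rewrite /D mulr_gt0 // ltr_wpDl // addr_ge0 // mulr_ge0.
set eta := eps / D.
have eta_gt0 : 0 < eta by rewrite divr_gt0.
have etaD : eta * D = eps by rewrite divfK ?gt_eqF.
have [N N_big] := expn_unbounded_seq ((1 + 2 * n%:R) / eta)
  (fun a a_pts => s_gt1 (pts_A a_pts)).
exists N => x Ax.
have eta_sN a : a \in pts -> 1 + 2 * n%:R <= eta * s a ^+ N.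
  by move=> /N_big; rewrite ler_pdivrMr // [eta * _]mulrC.
have [up lo] := kmean_bounds (ltW eta_gt0) eta_sN Ax.
have lx := l_pos Ax.
have kKeta : 0 <= k * K * eta := mulr_ge0 (mulr_ge0 k_ge0 K_ge0) (ltW eta_gt0).
have keta : 0 <= k * eta := mulr_ge0 k_ge0 (ltW eta_gt0).
have f_gt0 : 0 < kmean N l pts x.
  have coef_gt0 : 0 < theta ^+ 2 * (1 + k * eta).
    by rewrite mulr_gt0 ?exprn_gt0 ?ltr_pwDl // (lt_le_trans ltr01).
  by rewrite -(pmulr_rgt0 _ coef_gt0) (lt_le_trans lx lo).
apply: rel_err_le => //.
  apply: le_trans up _; rewrite ler_wpM2r ?ltW //; rewrite /D in etaD; nra.
apply: le_trans lo _; rewrite ler_wpM2r ?ltW //; rewrite /D in etaD; nra.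
Qed.

End Sampling.

Section Expressions.
Variables (R : realType) (n : nat).
Implicit Types (e : sfexpr R n) (N : nat).

Lemma sf_eval_gt0 e (y : 'I_n -> R) :
  sf_pos_consts e -> (forall i, 0 < y i) -> 0 < sf_eval e y.
Proof.
move=> + y_pos; elim: e => [e1 IH1 e2 IH2|e1 IH1 e2 IH2|e1 IH1 e2 IH2|c|i] //=.
- by case=> /IH1 ? /IH2 ?; exact: addr_gt0.
- by case=> /IH1 ? /IH2 ?; exact: mulr_gt0.
- by case=> /IH1 ? /IH2 ?; exact: divr_gt0.
Qed.

Fixpoint sf_pow e N : sfexpr R n :=
  if N is N'.+1 then SFMul e (sf_pow e N') else SFConst _ 1.

Definition sf_sum e (es : seq (sfexpr R n)) := foldr (@SFAdd R n) e es.

Definition sf_kernel N (a : 'rV[R]_n) :=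
  sf_sum (SFConst _ 1)
    [seq SFAdd (sf_pow (SFDiv (SFVar _ i) (SFConst _ (a 0 i))) N)
               (sf_pow (SFDiv (SFConst _ (a 0 i)) (SFVar _ i)) N) | i <- index_enum 'I_n].

Definition sf_ksum N (c : 'rV[R]_n -> R) (a0 : 'rV[R]_n) (ps : seq 'rV[R]_n) :=
  let term a := SFDiv (SFConst _ (c a)) (sf_kernel N a) in sf_sum (term a0) (map term ps).

Definition sf_kmean N (l : 'rV[R]_n -> R) a0 ps :=
  SFDiv (sf_ksum N l a0 ps) (sf_ksum N (fun=> 1) a0 ps).

Lemma sf_eval_pow e N y : sf_eval (sf_pow e N) y = sf_eval e y ^+ N.
Proof. by elim: N => //= N ->; rewrite exprS. Qed.

Lemma sf_eval_sum e es y :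
  sf_eval (sf_sum e es) y = sf_eval e y + \sum_(e' <- es) sf_eval e' y.
Proof.
elim: es => [|e' es IH] /=; first by rewrite big_nil addr0.
by rewrite IH big_cons addrCA.
Qed.

Lemma sf_eval_kernel N a (x : 'rV[R]_n) :
  sf_eval (sf_kernel N a) (fun i => x 0 i) = kernel N x a.
Proof.
rewrite sf_eval_sum big_map; congr (_ + _).
by apply: eq_bigr => i _ /=; rewrite !sf_eval_pow.
Qed.

Lemma sf_eval_ksum N c a0 ps (x : 'rV[R]_n) :
  sf_eval (sf_ksum N c a0 ps) (fun i => x 0 i) =
  \sum_(a <- a0 :: ps) c a * (kernel N x a)^-1.
Proof.
rewrite sf_eval_sum big_map big_cons /= sf_eval_kernel; congr (_ + _).
by apply: eq_bigr => a _ /=; rewrite sf_eval_kernel.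
Qed.

Lemma sf_eval_kmean N l a0 ps (x : 'rV[R]_n) :
  sf_eval (sf_kmean N l a0 ps) (fun i => x 0 i) = kmean N l (a0 :: ps) x.
Proof.
rewrite /= !sf_eval_ksum /kmean /wmean; congr (_ / _).
by apply: eq_bigr => a _; rewrite mul1r.
Qed.

Lemma sf_pos_pow e N : sf_pos_consts e -> sf_pos_consts (sf_pow e N).
Proof. by move=> e_pos; elim: N => //=; exact: ltr01. Qed.

Lemma sf_pos_sum (I : eqType) e (g : I -> sfexpr R n) (r : seq I) :
  sf_pos_consts e -> (forall i, i \in r -> sf_pos_consts (g i)) ->
  sf_pos_consts (sf_sum e (map g r)).
Proof.
move=> e_pos; elim: r => //= i r IH g_pos; split; first exact/g_pos/mem_head.
by apply: IH => j jr; apply: g_pos; rewrite in_cons jr orbT.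
Qed.

Lemma sf_pos_kernel N a : positive_row a -> sf_pos_consts (sf_kernel N a).
Proof.
move=> a_pos; apply: sf_pos_sum; first exact: ltr01.
by move=> i _; split; apply: sf_pos_pow; split=> //; exact: a_pos.
Qed.

Lemma sf_pos_ksum N c a0 ps :
  (forall a, a \in a0 :: ps -> 0 < c a /\ positive_row a) ->
  sf_pos_consts (sf_ksum N c a0 ps).
Proof.
move=> pos; have [c0 a0_pos] := pos a0 (mem_head a0 ps).
apply: sf_pos_sum; first by split; [|exact: sf_pos_kernel].
move=> a a_ps; have [ca a_pos] : 0 < c a /\ positive_row a.
  by apply: pos; rewrite in_cons a_ps orbT.
by split; [|exact: sf_pos_kernel].
Qed.

Lemma sf_pos_kmean N l a0 ps :
  (forall a, a \in a0 :: ps -> 0 < l a /\ positive_row a) ->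
  sf_pos_consts (sf_kmean N l a0 ps).
Proof.
move=> pos; split; apply: sf_pos_ksum => // a /pos[_ a_pos].
by split; [exact: ltr01|].
Qed.

End Expressions.

Theorem corollary4 (R : realType) (n : nat) (A : set 'rV[R]_n)
  (l : 'rV[R]_n -> R) :
  compact A -> log_convex A ->
  {within A, continuous l} -> (forall x, A x -> 0 < l x) ->
  forall eps : R, 0 < eps ->
  exists (p q : nat) (E : sfexpr R n),
    [/\ (0 < p)%N, (0 < q)%N, sf_pos_consts E &
      forall x, A x ->
        let f := (sf_eval E (fun i => x 0 i `^ (q%:R^-1))) `^ (p%:R^-1) in
        `|(l x - f) / Num.min (l x) f| <= eps].
Proof.
move=> A_compact [A_pos _] l_cont l_pos eps eps_gt0.
have [theta theta_gt1 theta2] : exists2 theta, 1 < theta & theta ^+ 2 <= 1 + eps / 2.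
  have [|theta theta_gt1 theta2] := exists_root_gt1 1 (_ : 1 < 1 + eps / 2).
    by rewrite ltrDl divr_gt0.
  by exists theta; rewrite ?theta2.
have [s [s_gt1 s_cmp]] := comparability_radii A_pos l_cont l_pos theta_gt1.
have [pts pts_A pts_cover] := mdist_finite_cover A_pos A_compact s_gt1.
have [N approx] := kmean_rel_err A_pos l_pos (ltW theta_gt1) pts_A s_gt1 s_cmp
  pts_cover eps_gt0 theta2.
case: pts => [|a0 ps] in pts_A pts_cover approx *.
  exists 1%N, 1%N, (SFConst _ 1); split=> // [|x /pts_cover[]//]; exact: ltr01.
have E_pos : sf_pos_consts (sf_kmean N l a0 ps).
  by apply: sf_pos_kmean => a /pts_A Aa; split; [exact: l_pos|exact: A_pos Aa].
exists 1%N, 1%N, (sf_kmean N l a0 ps); split=> // x Ax; cbv zeta.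
rewrite invr1.
have -> : (fun i => x 0 i `^ 1) = (fun i => x 0 i).
  by apply: funext => i; rewrite powRr1 // ltW // (A_pos x Ax).
rewrite powRr1; first by rewrite sf_eval_kmean; exact: approx.
by apply/ltW/sf_eval_gt0 => // i; exact: (A_pos x Ax).
Qed.
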